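(* Let $A\subset\mathbb{R}^d$ be a finite set of sites in general position. For all $r\in[0,\infty)$ and $k\in\mathbb{N}$: (1) the vertex sets of $\textnormal{S-Rhomb}_{r,k}$ and $\textnormal{S-Del}_{r,k}$ are equal (identifying the vertex $(\sum_{a\in v}a,-|v|)$ of the rhomboid tiling with the subset $v\subseteq A$); (2) the vertices of each sliced rhomboid in $\textnormal{S-Rhomb}_{r,k}$ span a simplex in $\textnormal{S-Del}_{r,k}$; (3) the vertices of each simplex in $\textnormal{S-Del}_{r,k}$ are contained in a sliced rhomboid of $\textnormal{S-Rhomb}_{r,k}$.
   Context: $\mathbb{N}=\{1,2,\dots\}$. Simplicial side: for $\tilde A\subseteq A$ let $\mathrm{Ball}_r(\tilde A)=\{b: \|b-\tilde a\|\le r\ \forall\tilde a\in\tilde A\}$ and for $|\tilde A|=k$ let $\mathrm{Vor}(\tilde A)=\{b\in\mathbb{R}^d: \|b-\tilde a\|\le\|b-a\|\ \forall\tilde a\in\tilde A, a\in A\setminus\tilde A\}$. Let $\mathrm{Del}^{+}_{r,k}$ be the abstract simplicial complex whose vertices are subsets $\tilde A\subseteq A$ with $|\tilde A|\in\{k,k+1\}$ and $\mathrm{Ball}_r(\tilde A)\cap\mathrm{Vor}(\tilde A)\neq\emptyset$, and whose simplices are the sets $\sigma$ of such subsets with $\bigcap_{\tilde A\in\sigma}(\mathrm{Ball}_r(\tilde A)\cap\mathrm{Vor}(\tilde A))\neq\emptyset$; $\textnormal{S-Del}_{r,k}=\bigcup_{i\ge k}\mathrm{Del}^{+}_{r,i}$.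 Rhomboid side: a $(d-1)$-sphere $S\subset\mathbb{R}^d$ partitions $A=A_{in}\sqcup A_{on}\sqcup A_{out}$ (sites inside, on, outside $S$). The combinatorial rhomboid of $S$ is $\rho_S=\{A_{in}\cup Q: Q\subseteq A_{on}\}$; its elements are (combinatorial) vertices. A vertex $v=\{a_1,\dots,a_m\}$ is embedded as the point $(\sum_i a_i,-m)\in\mathbb{R}^{d+1}$ ($m$ is its depth), and the geometric rhomboid of $S$ is the convex hull of its embedded vertices. The rhomboid tiling $\mathrm{Rhomb}$ is the polyhedral complex of all rhomboids $\rho_S$, $S$ ranging over spheres. For a rhomboid $\rho$, $r_\rho$ is the infimum of radii of spheres $S$ with $\rho_S=\rho$. The sliced rhomboid tiling $\textnormal{S-Rhomb}$ is the polyhedral complex obtained by cutting every rhomboid along the hyperplanes $\{x_{d+1}=-j\}$, $j=0,\dots,|A|$; its cells (sliced rhomboids) are the intersections of rhomboids with these hyperplanes and with the slabs $\{j\le -x_{d+1}\le j+1\}$. For a sliced rhomboid $\rho$, $k_\rho$ is the minimum depth of its vertices and $r_\rho:=r_{\rho'}$ where $\rho'$ is the smallest-dimensional rhomboid containing $\rho$. $\textnormal{S-Rhomb}_{r,k}=\{\rho\in\textnormal{S-Rhomb}: r_\rho\le r, k_\rho\ge k\}$. *)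

From HB Require Import structures.
From mathcomp Require Import all_boot all_order all_algebra.
From mathcomp Require Import boolp classical_sets reals.
Set Implicit Arguments.
Unset Strict Implicit.
Unset Printing Implicit Defensive.
Import Order.TTheory GRing.Theory Num.Theory.
Local Open Scope ring_scope.

Definition enorm (R : realType) (d : nat) (x : 'rV[R]_d) : R :=
  Num.sqrt (\sum_(i < d) x ord0 i ^+ 2).

Section Defs.
Variables (R : realType) (d n : nat) (A : 'I_n -> 'rV[R]_d).
(* The site set is {A i | i : 'I_n}; subsets of sites are {set 'I_n}. *)

Definition aff_indep (S : {set 'I_n}) : Prop :=
  forall lam : 'I_n -> R,
    \sum_(i in S) lam i = 0 -> \sum_(i in S) lam i *: A i = 0 ->
    forall i, i \in S -> lam i = 0.

Definition general_position : Prop :=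
  (forall S : {set 'I_n}, (#|S| <= d.+1)%N -> aff_indep S) /\
  (forall S : {set 'I_n}, #|S| = d.+2 ->
     ~ exists (z : 'rV[R]_d) (s : R), forall i, i \in S -> enorm (A i - z) = s).

Definition Ball (r : R) (T : {set 'I_n}) (b : 'rV[R]_d) : Prop :=
  forall i, i \in T -> enorm (b - A i) <= r.

Definition Vor (T : {set 'I_n}) (b : 'rV[R]_d) : Prop :=
  forall i j, i \in T -> j \notin T -> enorm (b - A i) <= enorm (b - A j).

Definition BallVor (r : R) (T : {set 'I_n}) (b : 'rV[R]_d) : Prop :=
  Ball r T b /\ Vor T b.

Definition delp_vertex (r : R) (i : nat) (T : {set 'I_n}) : Prop :=
  ((#|T| == i) || (#|T| == i.+1)) /\ exists b, BallVor r T b.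

Definition delp_simplex (r : R) (i : nat) (sigma : {set {set 'I_n}}) : Prop :=
  (0 < #|sigma|)%N /\
  (forall T, T \in sigma -> delp_vertex r i T) /\
  exists b, forall T, T \in sigma -> BallVor r T b.

(* S-Del_{r,k} = union over i >= k of Del^+_{r,i} *)
Definition sdel_vertex (r : R) (k : nat) (T : {set 'I_n}) : Prop :=
  exists i, (k <= i)%N /\ delp_vertex r i T.

Definition sdel_simplex (r : R) (k : nat) (sigma : {set {set 'I_n}}) : Prop :=
  exists i, (k <= i)%N /\ delp_simplex r i sigma.

Definition A_in (z : 'rV[R]_d) (s : R) : {set 'I_n} :=
  [set i | enorm (A i - z) < s].
Definition A_on (z : 'rV[R]_d) (s : R) : {set 'I_n} :=
  [set i | enorm (A i - z) == s].

Definition rhoS (z : 'rV[R]_d) (s : R) : {set {set 'I_n}} :=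
  [set A_in z s :|: Q | Q in powerset (A_on z s)].

Definition is_rhomb (rho : {set {set 'I_n}}) : Prop :=
  exists z s, 0 < s /\ rhoS z s = rho.

Definition rrad (rho : {set {set 'I_n}}) : R :=
  inf [set s : R | exists z, 0 < s /\ rhoS z s = rho].

Definition embed (v : {set 'I_n}) : 'rV[R]_(d + 1) :=
  row_mx (\sum_(i in v) A i) (\row_(j < 1) - (#|v|%:R)).

Definition last_coord (x : 'rV[R]_(d + 1)) : R := x ord0 (rshift d ord0).

Definition conv (rho : {set {set 'I_n}}) (x : 'rV[R]_(d + 1)) : Prop :=
  exists lam : {set 'I_n} -> R,
    (forall v, v \in rho -> 0 <= lam v) /\
    \sum_(v in rho) lam v = 1 /\
    x = \sum_(v in rho) lam v *: embed v.

(* sliced rhomboid: rhomboid rho cut by the hyperplane x_{d+1} = -j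
   (slab = false) or by the slab j <= -x_{d+1} <= j+1 (slab = true) *)
Definition cellpts (rho : {set {set 'I_n}}) (j : nat) (slab : bool)
  (x : 'rV[R]_(d + 1)) : Prop :=
  conv rho x /\
  (if slab then (j%:R <= - last_coord x) /\ (- last_coord x <= j.+1%:R)
   else - last_coord x = j%:R).

Definition extreme (C : 'rV[R]_(d + 1) -> Prop) (p : 'rV[R]_(d + 1)) : Prop :=
  C p /\ forall x y (t : R), C x -> C y -> 0 < t -> t < 1 ->
    p = t *: x + (1 - t) *: y -> x = y.

Definition cellV (rho : {set {set 'I_n}}) (j : nat) (slab : bool)
  : {set {set 'I_n}} :=
  [set v in rho | `[< extreme (cellpts rho j slab) (embed v) >] ].

Definition is_cell (rho : {set {set 'I_n}}) (j : nat) (slab : bool) : Prop :=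
  is_rhomb rho /\ (j <= n)%N /\ exists x, cellpts rho j slab x.

Definition smallest_rhomb (rho : {set {set 'I_n}}) (j : nat) (slab : bool)
  (rho' : {set {set 'I_n}}) : Prop :=
  is_rhomb rho' /\
  (forall x, cellpts rho j slab x -> conv rho' x) /\
  (forall rho'', is_rhomb rho'' ->
     (forall x, cellpts rho j slab x -> conv rho'' x) ->
     (#|rho'| <= #|rho''|)%N).

Definition in_SRhomb (r : R) (k : nat) (rho : {set {set 'I_n}}) (j : nat)
  (slab : bool) : Prop :=
  is_cell rho j slab /\
  (exists rho', smallest_rhomb rho j slab rho' /\ rrad rho' <= r) /\
  (forall v, v \in cellV rho j slab -> (k <= #|v|)%N).

Definition srhomb_vertex (r : R) (k : nat) (v : {set 'I_n}) : Prop :=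
  exists rho j slab, in_SRhomb r k rho j slab /\ v \in cellV rho j slab.

End Defs.

(* A vertex W of the rhomboid of a sphere (z, s) minimizes the total power
   sum_(i in W) (|A i - z|^2 - s^2), which is a sphere-independent quadratic
   term plus a linear function of the lifted point (sum_(i in W) A i, -|W|).
   Hence a lifted vertex of one rhomboid lying in the hull of another one is a
   vertex of the latter, and by general position rhomboid vertices are extreme
   points, so the vertices of a slice are the rhomboid vertices of the right
   depths.
   From rhomboids to Delaunay: the centres of spheres realizing the smallest
   rhomboid containing a slice, with radii tending to its r_rho, cluster at a
   point b lying in Ball_r and Vor of every vertex of the slice.
   From Delaunay to rhomboids: the sphere centred at a common point b through
   the farthest site has all vertices of the simplex in one slice of its
   rhomboid, and this rhomboid is the smallest one containing the slice; a
   one-vertex simplex {T} needs instead a perturbed sphere whose rhomboid is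
   {T}. *)

From HB Require Import structures.
From mathcomp Require Import all_boot all_order all_algebra.
From mathcomp Require Import boolp classical_sets reals topology normedtype.
From mathcomp Require Import fintype finset bigop ring lra zify.
Import Order.TTheory GRing.Theory Num.Theory.
Import numFieldNormedType.Exports.
Local Open Scope ring_scope.
Set Implicit Arguments.
Unset Strict Implicit.
Unset Printing Implicit Defensive.

Section Euclidean.
Variables (R : realType) (d : nat).
Implicit Types (u v w z : 'rV[R]_d) (s : R).

Definition dot u v : R := \sum_(c < d) u 0 c * v 0 c.
Definition sqnorm u : R := dot u u.

Lemma dotE u v : dot u v = (u *m v^T) 0 0.
Proof. by rewrite mxE; apply: eq_bigr => c _; rewrite mxE. Qed.

Lemma dotC u v : dot u v = dot v u.
Proof. by apply: eq_bigr => c _; rewrite mulrC. Qed.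

Lemma dotBl u v w : dot (u - v) w = dot u w - dot v w.
Proof. by rewrite /dot -sumrB; apply: eq_bigr => c _; rewrite !mxE mulrBl. Qed.

Lemma dotBr u v w : dot w (u - v) = dot w u - dot w v.
Proof. by rewrite dotC dotBl !(dotC w). Qed.

Lemma dotZl (a : R) u w : dot (a *: u) w = a * dot u w.
Proof. by rewrite /dot mulr_sumr; apply: eq_bigr => c _; rewrite mxE mulrA. Qed.

Lemma dotZr (a : R) u w : dot w (a *: u) = a * dot w u.
Proof. by rewrite dotC dotZl dotC. Qed.

Lemma dot_suml (I : finType) (P : pred I) (F : I -> 'rV[R]_d) w :
  dot (\sum_(i | P i) F i) w = \sum_(i | P i) dot (F i) w.
Proof.
rewrite /dot exchange_big /=; apply: eq_bigr => c _.
by rewrite summxE mulr_suml.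
Qed.

Lemma sqnormE u : sqnorm u = \sum_(c < d) u 0 c ^+ 2.
Proof. by apply: eq_bigr => c _; rewrite expr2. Qed.

Lemma sqnorm_ge0 u : 0 <= sqnorm u.
Proof. by rewrite sqnormE sumr_ge0 // => c _; rewrite sqr_ge0. Qed.

Lemma sqr_coord_le_sqnorm u c : u 0 c ^+ 2 <= sqnorm u.
Proof.
by rewrite sqnormE (bigD1 c) //= lerDl sumr_ge0 // => i _; rewrite sqr_ge0.
Qed.

Lemma sqnorm_eq0 u : (sqnorm u == 0) = (u == 0).
Proof.
rewrite sqnormE psumr_eq0 => [|c _]; last exact: sqr_ge0.
apply/allP/eqP => [u0|-> c _ /=]; last by rewrite mxE expr0n.
by apply/rowP => c; apply/eqP; rewrite mxE -sqrf_eq0; apply: u0 (mem_index_enum c).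
Qed.

Lemma sqnormB u z : sqnorm (u - z) = sqnorm u - 2 * dot u z + sqnorm z.
Proof. by rewrite /sqnorm dotBl !dotBr (dotC z u); ring. Qed.

Lemma sqnormZ (a : R) u : sqnorm (a *: u) = a ^+ 2 * sqnorm u.
Proof. by rewrite /sqnorm dotZl dotZr mulrA expr2. Qed.

Lemma sqnormBC u w : sqnorm (u - w) = sqnorm (w - u).
Proof. by rewrite !sqnormB (dotC w u); ring. Qed.

Lemma enormE u : enorm u = Num.sqrt (sqnorm u).
Proof. by rewrite sqnormE. Qed.

Lemma enormBC u w : enorm (u - w) = enorm (w - u).
Proof. by rewrite !enormE sqnormBC. Qed.

Lemma enorm_ge0 u : 0 <= enorm u.
Proof. exact: sqrtr_ge0. Qed.

Lemma enorm_eq0 u : (enorm u == 0) = (u == 0).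
Proof. by rewrite enormE sqrtr_eq0 le_eqVlt ltNge sqnorm_ge0 orbF sqnorm_eq0. Qed.

Lemma ler_enorm u v : (enorm u <= enorm v) = (sqnorm u <= sqnorm v).
Proof. by rewrite !enormE ler_sqrt // sqnorm_ge0. Qed.

Lemma enorm_le u s : 0 <= s -> (enorm u <= s) = (sqnorm u <= s ^+ 2).
Proof. by move=> s0; rewrite enormE -{1}(ger0_norm s0) -sqrtr_sqr ler_sqrt ?sqr_ge0. Qed.

Lemma enorm_lt u s : 0 <= s -> (enorm u < s) = (sqnorm u < s ^+ 2).
Proof.
by move=> s0; rewrite enormE -{1}(ger0_norm s0) -sqrtr_sqr ltNge ler_sqrt ?sqnorm_ge0 // -ltNge.
Qed.

Lemma enorm_ge u s : 0 <= s -> (s <= enorm u) = (s ^+ 2 <= sqnorm u).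
Proof. by move=> s0; rewrite leNgt enorm_lt // -leNgt. Qed.

Lemma enorm_eq u s : 0 <= s -> (enorm u == s) = (sqnorm u == s ^+ 2).
Proof. by move=> s0; rewrite eq_le enorm_le // enorm_ge // -eq_le. Qed.

Lemma continuous_sqnormB (a : 'rV[R]_d) :
  continuous (fun b : 'rV[R]_d => sqnorm (a - b)).
Proof.
have -> : (fun b => sqnorm (a - b)) =
    fun b => \sum_(c < d) (a 0 c - b 0 c) * (a 0 c - b 0 c).
  by apply: funext => b; apply: eq_bigr => c _; rewrite !mxE.
apply: (continuous_big add_continuous) => c _.
have coord : continuous (fun b : 'rV[R]_d => a 0 c - b 0 c).
  by move=> b; exact: (cvgB (@cst_continuous _ _ (a 0 c) b) (@coord_continuous R 1 d 0 c b)).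
by move=> b; exact: cvgM (coord b) (coord b).
Qed.

End Euclidean.

Lemma exists_subset_card (T : finType) (X : {set T}) (q : nat) :
  (q <= #|X|)%N -> exists2 Q : {set T}, Q \subset X & #|Q| = q.
Proof.
elim: q => [|q IH] qX; first by exists set0; rewrite ?sub0set ?cards0.
have [Q QX cardQ] := IH (ltnW qX).
have /subsetPn[x xX xQ] : ~~ (X \subset Q).
  by apply: contraTN qX => /subset_leq_card; rewrite cardQ -ltnNge.
by exists (x |: Q); rewrite ?subUset ?sub1set ?xX // cardsU1 xQ cardQ.
Qed.

Section MinimalSum.
Variables (R : realDomainType) (I : finType) (p : I -> R).

Let excess (W : {set I}) i : R :=
  (if i \in W then p i else 0) - (if p i < 0 then p i else 0).

Let sum_excess (W : {set I}) :
  \sum_(i in W) p i - \sum_(i in [set i | p i < 0]) p i = \sum_i excess W i.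
Proof.
rewrite [X in X - _]big_mkcond [X in _ - X]big_mkcond -sumrB.
by apply: eq_bigr => i _; rewrite inE.
Qed.

Let excess_ge0 (W : {set I}) i : 0 <= excess W i.
Proof. by rewrite /excess; case: (i \in W); case: ltrP => ?; lra. Qed.

Lemma sum_negative_le (W : {set I}) :
  \sum_(i in [set i | p i < 0]) p i <= \sum_(i in W) p i.
Proof. by rewrite -subr_ge0 sum_excess sumr_ge0. Qed.

Lemma sum_eq_negative (W : {set I}) :
  (\sum_(i in W) p i == \sum_(i in [set i | p i < 0]) p i) =
  ([set i | p i < 0] \subset W) && (W \subset [set i | p i <= 0]).
Proof.
rewrite -subr_eq0 sum_excess psumr_eq0 => [|i _]; last exact: excess_ge0.
apply/allP/andP => [ex0|[/subsetP NW /subsetP Wle] i _].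
  split; apply/subsetP => i; have /eqP := ex0 i (mem_index_enum i);
    rewrite !inE /excess /=; case: (i \in W); case: ltrP => //; lra.
apply/eqP; move: (NW i) (Wle i); rewrite !inE /excess.
case: (i \in W); case: ltrP => pi iW iN.
- lra.
- by move/(_ isT): iN => iN; lra.
- by have := iW isT.
- lra.
Qed.

End MinimalSum.

Section Rhomboid.
Variables (R : realType) (d n : nat) (A : 'I_n -> 'rV[R]_d).
Implicit Types (z : 'rV[R]_d) (s : R) (V W : {set 'I_n}).

Local Notation I z s := (A_in A z s).
Local Notation O z s := (A_on A z s).

Lemma mem_rhoS z s W : (W \in rhoS A z s) = (I z s \subset W) && (W \subset I z s :|: O z s).
Proof.
apply/imsetP/andP => [[Q]|[IW WIO]].
  by rewrite inE => QO ->; rewrite subsetUl setUS.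
exists (W :\: I z s); first by rewrite inE subDset.
apply/setP => x; rewrite in_setU in_setD.
by case: (boolP (x \in I z s)) => //= /(subsetP IW) ->.
Qed.

Lemma A_in_rhoS z s : I z s \in rhoS A z s.
Proof. by rewrite mem_rhoS subxx subsetUl. Qed.

Lemma A_in_on_rhoS z s : I z s :|: O z s \in rhoS A z s.
Proof. by rewrite mem_rhoS subxx subsetUl. Qed.

Lemma rhoS_eq z s z' s' : rhoS A z s = rhoS A z' s' ->
  I z s = I z' s' /\ I z s :|: O z s = I z' s' :|: O z' s'.
Proof.
move=> e; have := A_in_rhoS z s; have := A_in_rhoS z' s'.
have := A_in_on_rhoS z s; have := A_in_on_rhoS z' s'.
rewrite -e {2 4}e !mem_rhoS => /andP[_ ?] /andP[_ ?] /andP[? _] /andP[? _].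
by split; apply/eqP; rewrite eqEsubset; apply/andP.
Qed.

Lemma disjoint_A_in_on z s : [disjoint I z s & O z s].
Proof. by apply/pred0P => i; rewrite /= !inE; case: ltgtP. Qed.

Lemma card_A_in_on z s (Q : {set 'I_n}) : Q \subset O z s ->
  #|I z s :|: Q| = (#|I z s| + #|Q|)%N.
Proof.
move=> QO; rewrite cardsU (_ : _ :&: _ = set0) ?cards0 ?subn0 //.
exact/disjoint_setI0/(disjointWr QO (disjoint_A_in_on z s)).
Qed.

Lemma card_rhoS z s W : W \in rhoS A z s ->
  (#|I z s| <= #|W| <= #|I z s| + #|O z s|)%N.
Proof.
rewrite mem_rhoS => /andP[IW WIO]; rewrite subset_leq_card //=.
by rewrite -card_A_in_on // subset_leq_card.
Qed.

Lemma rhoS_card_with z s o (m : nat) : o \in O z s ->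
  (#|I z s| < m <= #|I z s| + #|O z s|)%N ->
  exists2 V, V \in rhoS A z s & (o \in V) && (#|V| == m).
Proof.
move=> oO /andP[lo hi].
have cardO : #|O z s| = #|O z s :\ o|.+1 by rewrite (cardsD1 o) oO.
have [Q QO cardQ] := @exists_subset_card _ (O z s :\ o) (m - #|I z s|).-1 ltac:(lia).
have oQO : o |: Q \subset O z s by rewrite subUset sub1set oO (subset_trans QO) ?subsetDl.
exists (I z s :|: (o |: Q)); first by rewrite mem_rhoS subsetUl setUS.
rewrite !inE eqxx orbT card_A_in_on // cardsU1 cardQ.
have -> : o \notin Q by apply: contraTN QO => oQ; apply/subsetPn; exists o; rewrite ?setD11.
apply/eqP; lia.
Qed.

Lemma rhoS_card_without z s o (m : nat) : o \in O z s ->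
  (#|I z s| <= m < #|I z s| + #|O z s|)%N ->
  exists2 V, V \in rhoS A z s & (o \notin V) && (#|V| == m).
Proof.
move=> oO /andP[lo hi].
have cardO : #|O z s| = #|O z s :\ o|.+1 by rewrite (cardsD1 o) oO.
have [Q QO cardQ] := @exists_subset_card _ (O z s :\ o) (m - #|I z s|) ltac:(lia).
have QO' : Q \subset O z s by rewrite (subset_trans QO) ?subsetDl.
exists (I z s :|: Q); first by rewrite mem_rhoS subsetUl setUS.
rewrite card_A_in_on // cardQ inE negb_or -andbA; apply/and3P; split.
- by apply: contraL oO => oI; rewrite (disjointFr (disjoint_A_in_on z s) oI).
- by apply: contraTN QO => oQ; apply/subsetPn; exists o; rewrite ?setD11.
- by apply/eqP; lia.
Qed.

Lemma rhoS_card z s (m : nat) : (#|I z s| <= m <= #|I z s| + #|O z s|)%N ->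
  exists2 V, V \in rhoS A z s & #|V| == m.
Proof.
move=> /andP[lo hi]; have [Q QO cardQ] := @exists_subset_card _ (O z s) (m - #|I z s|) ltac:(lia).
exists (I z s :|: Q); first by rewrite mem_rhoS subsetUl setUS.
by rewrite card_A_in_on // cardQ; apply/eqP; lia.
Qed.

End Rhomboid.

Section Lifting.
Variables (R : realType) (d n : nat) (A : 'I_n -> 'rV[R]_d).
Implicit Types (z g : 'rV[R]_d) (s t : R) (V W : {set 'I_n}) (rho : {set {set 'I_n}}).

Definition embed_form g t : 'cV[R]_(d + 1) := col_mx g^T t%:M.

Lemma embed_formE g t W :
  (embed A W *m embed_form g t) 0 0 = \sum_(i in W) (dot (A i) g - t).
Proof.
rewrite mul_row_col mul_mx_scalar mxE -dotE dot_suml !mxE sumrB sumr_const.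
by rewrite mulrN mulr_natr.
Qed.

Lemma conv_mulmxE (c : 'cV[R]_(d + 1)) rho (lam : {set 'I_n} -> R) :
  ((\sum_(W in rho) lam W *: embed A W) *m c) 0 0 =
  \sum_(W in rho) lam W * (embed A W *m c) 0 0.
Proof. by rewrite mulmx_suml summxE; apply: eq_bigr => W _; rewrite -scalemxAl mxE. Qed.

Lemma embed_depth W : - last_coord (embed A W) = #|W|%:R.
Proof. by rewrite /last_coord row_mxEr mxE opprK. Qed.

Lemma conv_embed rho W : W \in rho -> conv A rho (embed A W).
Proof.
move=> Wrho; exists (fun V => (V == W)%:R); split=> [V _|]; first by rewrite ler0n.
by split; rewrite (bigD1 W) //= eqxx ?scale1r big1 ?addr0 // => V /andP[_ /negbTE->];
  rewrite ?scale0r.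
Qed.

Lemma conv_depth rho x (a b : nat) :
  (forall W, W \in rho -> a <= #|W| <= b)%N -> conv A rho x ->
  a%:R <= - last_coord x <= b%:R.
Proof.
move=> rho_ab [lam [lam0 [lam1 ->]]].
have -> : - last_coord (\sum_(W in rho) lam W *: embed A W) = \sum_(W in rho) lam W * #|W|%:R.
  rewrite /last_coord summxE -sumrN; apply: eq_bigr => W _.
  by rewrite mxE -embed_depth mulrN.
have avg (c : R) : c = \sum_(W in rho) lam W * c by rewrite -mulr_suml lam1 mul1r.
rewrite [a%:R]avg [b%:R]avg; apply/andP; split; apply: ler_sum => W Wrho;
  by apply: ler_wpM2l; rewrite ?lam0 // ler_nat; case/andP: (rho_ab W Wrho).
Qed.

Definition power z s i : R := sqnorm (A i - z) - s ^+ 2.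

Lemma sum_powerE z s W : \sum_(i in W) power z s i =
  \sum_(i in W) sqnorm (A i) + (embed A W *m embed_form (-2 *: z) (s ^+ 2 - sqnorm z)) 0 0.
Proof.
rewrite embed_formE -big_split /=; apply: eq_bigr => i _.
by rewrite /power sqnormB dotZr; ring.
Qed.

Lemma A_in_power z s : 0 <= s -> A_in A z s = [set i | power z s i < 0].
Proof. by move=> s0; apply/setP => i; rewrite !inE enorm_lt // subr_lt0. Qed.

Lemma mem_rhoS_power z s W : 0 <= s ->
  (W \in rhoS A z s) = (\sum_(i in W) power z s i == \sum_(i in A_in A z s) power z s i).
Proof.
move=> s0; have A_in_onE : A_in A z s :|: A_on A z s = [set i | power z s i <= 0].
  by apply/setP => i; rewrite !inE enorm_lt // enorm_eq // subr_le0 le_eqVlt orbC.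
by rewrite mem_rhoS A_in_onE A_in_power // sum_eq_negative.
Qed.

Lemma sum_power_rhoS z s W : 0 <= s -> W \in rhoS A z s ->
  \sum_(i in W) power z s i = \sum_(i in A_in A z s) power z s i.
Proof. by move=> s0; rewrite mem_rhoS_power // => /eqP. Qed.

Lemma sum_power_A_in_le z s W : 0 <= s ->
  \sum_(i in A_in A z s) power z s i <= \sum_(i in W) power z s i.
Proof. by move=> s0; rewrite A_in_power // sum_negative_le. Qed.

(* Both total powers are [L W] plus a linear function of [embed A W], so for
   both spheres the [lam]-average over [rhoS A z' s'] exceeds the value at [V]
   by the same amount [comb]. *)
Lemma mem_rhoS_conv z s z' s' V : 0 <= s -> 0 <= s' ->
  V \in rhoS A z s -> conv A (rhoS A z' s') (embed A V) -> V \in rhoS A z' s'.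
Proof.
move=> s0 s0' Vrho [lam [lam0 [lam1 eV]]].
pose P z s W := \sum_(i in W) power z s i.
pose L W := \sum_(i in W) sqnorm (A i).
have avg (c : R) : c = \sum_(W in rhoS A z' s') lam W * c.
  by rewrite -mulr_suml lam1 mul1r.
have comb z1 s1 : \sum_(W in rhoS A z' s') lam W * P z1 s1 W =
    \sum_(W in rhoS A z' s') lam W * L W - L V + P z1 s1 V.
  rewrite /P sum_powerE eV conv_mulmxE.
  under eq_bigr do rewrite sum_powerE mulrDr.
  by rewrite big_split /= /L; ring.
have lo : P z s V <= \sum_(W in rhoS A z' s') lam W * P z s W.
  rewrite /P sum_power_rhoS // [X in X <= _]avg.
  by apply: ler_sum => W Wrho; apply: ler_wpM2l; rewrite ?lam0 ?sum_power_A_in_le.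
have hi : \sum_(W in rhoS A z' s') lam W * P z' s' W = P z' s' (A_in A z' s').
  rewrite [RHS]avg; apply: eq_bigr => W Wrho.
  by rewrite /P sum_power_rhoS.
rewrite mem_rhoS_power // eq_le sum_power_A_in_le // andbT.
move: lo hi; rewrite !comb /P; lra.
Qed.

End Lifting.

Section AffineIndependence.
Variables (R : realType) (d n : nat) (A : 'I_n -> 'rV[R]_d).

(* The sites of [S], lifted to [(A i, 1)] and padded with unit vectors
   outside [S], form a row-free matrix: its transpose is then onto. *)
Lemma aff_indep_solve (S : {set 'I_n}) (f : 'I_n -> R) : aff_indep A S ->
  exists (g : 'rV[R]_d) (c : R), forall i, i \in S -> dot (A i) g + c = f i.
Proof.
move=> indepS.
pose MA : 'M[R]_(n, d) := \matrix_(i, j) (if i \in S then A i 0 j else 0).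
pose M1 : 'M[R]_(n, 1) := \matrix_(i, j) (i \in S)%:R.
pose ME : 'M[R]_(n, n) := \matrix_(i, j) ((i \notin S) && (i == j))%:R.
pose M := row_mx (row_mx MA M1) ME.
have M_free : row_free M.
  rewrite -kermx_eq0; apply/eqP/row_matrixP => k; rewrite row0.
  have : row k (kermx M) *m M = 0 by rewrite -row_mul mulmx_ker row0.
  move: (row k _) => v.
  rewrite !mul_mx_row => /eqP; rewrite !row_mx_eq0 => /andP[/andP[/eqP vA /eqP v1] /eqP vE].
  have v_out j : j \notin S -> v 0 j = 0.
    move=> jS; transitivity ((v *m ME) 0 j); last by rewrite vE mxE.
    rewrite mxE (bigD1 j) //= mxE jS eqxx mulr1 big1 ?addr0 // => i /negbTE ij.
    by rewrite mxE ij andbF mulr0.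
  have v_in : forall i, i \in S -> v 0 i = 0.
    apply: indepS.
      transitivity ((v *m M1) 0 0); last by rewrite v1 mxE.
      rewrite mxE big_mkcond /=.
      by apply: eq_bigr => i _; rewrite mxE; case: (i \in S); rewrite ?mulr1 ?mulr0.
    apply/rowP => c; transitivity ((v *m MA) 0 c); last by rewrite vA.
    rewrite mxE summxE big_mkcond /=.
    by apply: eq_bigr => i _; rewrite !mxE; case: (i \in S); rewrite ?mulr0.
  by apply/rowP => i; rewrite mxE; case: (boolP (i \in S)) => [/v_in|/v_out].
have /submxP[x fx] : (\row_i f i <= M^T)%MS by rewrite submx_full // /row_full mxrank_tr.
rewrite -[x]hsubmxK -[lsubmx x]hsubmxK in fx.
move: (lsubmx (lsubmx x)) (rsubmx (lsubmx x)) (rsubmx x) fx => g c e fx.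
exists g, (c 0 0) => i iS; have := congr1 (fun m : 'rV[R]_n => m 0 i) fx.
rewrite mxE => ->; rewrite /M !tr_row_mx !mul_row_col !mxE.
rewrite [X in _ = _ + X]big1 => [|j _]; last by rewrite !mxE iS mulr0.
rewrite big_ord1 !mxE iS mulr1 addr0 /dot; congr (_ + _).
by apply: eq_bigr => k _; rewrite !mxE iS mulrC.
Qed.

End AffineIndependence.

Section ExtremePoints.
Variables (R : realType) (d n : nat) (A : 'I_n -> 'rV[R]_d).
Implicit Types (z : 'rV[R]_d) (s : R) (V W : {set 'I_n}) (rho : {set {set 'I_n}}).

Lemma cospherical_aff_indep (S : {set 'I_n}) z s : general_position A ->
  (forall i, i \in S -> enorm (A i - z) = s) -> aff_indep A S.
Proof.
move=> [small_indep no_cosphere] Ssphere; apply: small_indep; rewrite leqNgt.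
apply/negP => /(@exists_subset_card _ S) [Q QS cardQ].
by apply: (no_cosphere Q cardQ); exists z, s => i /(subsetP QS); apply: Ssphere.
Qed.

Lemma A_on_aff_indep z s : general_position A -> aff_indep A (A_on A z s).
Proof.
by move=> gp; apply: (cospherical_aff_indep (z := z) (s := s)) => // i; rewrite inE => /eqP.
Qed.

Lemma extreme_conv_argmax rho V (c : 'cV[R]_(d + 1)) : V \in rho ->
  (forall W, W \in rho -> W != V -> (embed A W *m c) 0 0 < (embed A V *m c) 0 0) ->
  extreme (conv A rho) (embed A V).
Proof.
move=> Vrho Vmax; pose F (x : 'rV[R]_(d + 1)) := (x *m c) 0 0.
have F_conv x : conv A rho x ->
    F x <= F (embed A V) /\ (F x = F (embed A V) -> x = embed A V).
  case=> lam [lam0 [lam1 ->]]; rewrite /F conv_mulmxE.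
  have gapE : F (embed A V) - \sum_(W in rho) lam W * F (embed A W) =
      \sum_(W in rho) lam W * (F (embed A V) - F (embed A W)).
    by rewrite -[X in X - _]mul1r -lam1 mulr_suml -sumrB; apply: eq_bigr => W _; rewrite mulrBr.
  have gap_ge0 W : W \in rho -> 0 <= lam W * (F (embed A V) - F (embed A W)).
    move=> Wrho; rewrite mulr_ge0 ?lam0 // subr_ge0.
    by case: (eqVneq W V) => [->|WV] //; apply/ltW/Vmax.
  split; first by rewrite -subr_ge0 gapE sumr_ge0.
  move/eqP; rewrite eq_sym -subr_eq0 gapE psumr_eq0 // => /allP gap0.
  have lamW0 W : W \in rho -> W != V -> lam W = 0.
    move=> Wrho WV; have /implyP/(_ Wrho) := gap0 W (mem_index_enum W).
    rewrite mulf_eq0 subr_eq0 => /orP[/eqP //|/eqP FVW].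
    by move: (Vmax W Wrho WV); rewrite /F in FVW; rewrite FVW ltxx.
  have lamV1 : lam V = 1.
    rewrite -lam1 (bigD1 V) //= big1 ?addr0 // => W /andP[]; exact: lamW0.
  rewrite (bigD1 V) //= big1 ?addr0 ?lamV1 ?scale1r // => W /andP[Wrho WV].
  by rewrite lamW0 ?scale0r.
split; first exact: conv_embed.
move=> x y t cx cy t0 t1 e.
have Fe : F (embed A V) = t * F x + (1 - t) * F y.
  by rewrite e /F mulmxDl -!scalemxAl !mxE.
have [Fx ex] := F_conv x cx; have [Fy ey] := F_conv y cy.
move: Fe Fx Fy; set M := F (embed A V) => Fe Fx Fy.
have FxM : F x = M by nra.
have FyM : F y = M by nra.
by rewrite ex // ey.
Qed.

Lemma mem_rhoS_off_on z s W i : W \in rhoS A z s -> i \notin A_on A z s ->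
  (i \in W) = (i \in A_in A z s).
Proof.
rewrite mem_rhoS => /andP[IW WIO] iO; apply/idP/idP => [iW|/(subsetP IW)//].
by move/subsetP: WIO => /(_ i iW); rewrite in_setU (negbTE iO) orbF.
Qed.

(* A linear functional which is [+1] on the cospherical sites of [V] and [-1]
   on the other cospherical sites singles out [V] among the vertices. *)
Lemma rhoS_extreme z s V : general_position A -> 0 <= s ->
  V \in rhoS A z s -> extreme (conv A (rhoS A z s)) (embed A V).
Proof.
move=> gp s0 Vrho.
have [g [c gc]] :=
  aff_indep_solve (fun i => if i \in V then 1 else -1) (@A_on_aff_indep z s gp).
apply: (extreme_conv_argmax (c := embed_form g (- c)) Vrho) => W Wrho WV.
rewrite !embed_formE -subr_gt0 [X in X - _]big_mkcond [X in _ - X]big_mkcond -sumrB /=.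
have term_ge0 i : 0 <= (if i \in V then dot (A i) g - - c else 0) -
                       (if i \in W then dot (A i) g - - c else 0).
  case: (boolP (i \in A_on A z s)) => iO; last first.
    by rewrite (mem_rhoS_off_on Vrho iO) (mem_rhoS_off_on Wrho iO) subrr.
  by rewrite opprK gc //; case: (i \in V); case: (i \in W); lra.
have /existsP[i0 i0VW] : [exists i, (i \in V) != (i \in W)].
  apply: contraNT WV => /existsPn VW; apply/eqP/setP => i.
  by move/negPn/eqP: (VW i).
rewrite (bigD1 i0) //=; apply: ltr_wpDr; first exact: sumr_ge0.
have i0O : i0 \in A_on A z s.
  apply: contraNT i0VW => i0O.
  by rewrite (mem_rhoS_off_on Vrho i0O) (mem_rhoS_off_on Wrho i0O).
rewrite opprK gc //; move: i0VW; case: (i0 \in V); case: (i0 \in W) => //= _; lra.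
Qed.

End ExtremePoints.

Section Cells.
Variables (R : realType) (d n : nat) (A : 'I_n -> 'rV[R]_d).
Implicit Types (z : 'rV[R]_d) (s : R) (V W : {set 'I_n}) (rho : {set {set 'I_n}}).

Lemma rrad_ge0 rho : is_rhomb A rho -> 0 <= rrad A rho.
Proof.
move=> [z [s [s0 e]]]; apply: lb_le_inf; first by exists s, z.
by move=> x [_ [x0 _]]; apply: ltW.
Qed.

Lemma rrad_le z s : 0 < s -> rrad A (rhoS A z s) <= s.
Proof. by move=> s0; apply: ge_inf; [exists 0 => x [_ [x0 _]]; apply: ltW | exists z]. Qed.

Definition in_slice (j : nat) (slab : bool) (m : nat) : bool :=
  if slab then (j <= m <= j.+1)%N else m == j.

Lemma cellpts_embed rho j slab V : V \in rho -> in_slice j slab #|V| ->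
  cellpts A rho j slab (embed A V).
Proof.
move=> Vrho Vj; split; first exact: conv_embed.
by rewrite embed_depth; case: slab Vj => [/andP[]|/eqP ->] //; rewrite !ler_nat => -> ->.
Qed.

Lemma mem_cellV rho j slab V : V \in cellV A rho j slab ->
  V \in rho /\ in_slice j slab #|V|.
Proof.
rewrite inE => /andP[Vrho /asboolP[[_]]]; rewrite embed_depth => Vj _; split=> //.
by case: slab Vj => [[]|/eqP]; rewrite /in_slice ?eqr_nat // -!(ler_nat R) => -> ->.
Qed.

Lemma cellV_rhoS z s j slab V : general_position A -> 0 <= s ->
  (V \in cellV A (rhoS A z s) j slab) = (V \in rhoS A z s) && in_slice j slab #|V|.
Proof.
move=> gp s0; apply/idP/andP => [/mem_cellV //|[Vrho Vj]].
rewrite inE Vrho; apply/asboolP; split; first exact: cellpts_embed.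
by move=> x y t [cx _] [cy _]; apply: (rhoS_extreme gp s0 Vrho).2.
Qed.

Lemma cellpts_rhoS_vertex z s j slab x : cellpts A (rhoS A z s) j slab x ->
  exists2 V, V \in rhoS A z s & in_slice j slab #|V|.
Proof.
case=> /(conv_depth (@card_rhoS _ _ _ A z s)) /andP[lo hi] xj.
set a := #|A_in A z s| in lo; set b := (a + #|A_on A z s|)%N in hi.
have vertex_of_card m : (a <= m <= b)%N -> in_slice j slab m ->
    exists2 V, V \in rhoS A z s & in_slice j slab #|V|.
  by move=> /(rhoS_card (A := A)) [V Vrho /eqP cardV] mj; exists V; rewrite ?cardV.
case: slab xj vertex_of_card => [[jx xj]|xj] vertex_of_card.
  have jb : (j <= b)%N by rewrite -(ler_nat R); apply: le_trans jx hi.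
  have aj : (a <= j.+1)%N by rewrite -(ler_nat R); apply: le_trans lo xj.
  by case: (leqP a j) => [aj'|ja]; [apply: (vertex_of_card j) | apply: (vertex_of_card j.+1)];
    apply/andP; split; rewrite /b; lia.
by apply: (vertex_of_card j); rewrite /in_slice // -!(ler_nat R) -xj lo hi.
Qed.

End Cells.

Section Compactness.
Variables (R : realType) (d : nat).

Lemma bounded_seq_cluster (a : 'rV[R]_d) (t : R) (u : nat -> 'rV[R]_d) :
  0 <= t -> (forall k, sqnorm (a - u k) <= t ^+ 2) -> exists p, cluster (u @ \oo)%classic p.
Proof.
move=> t0 u_near.
have box_compact := rV_compact (fun c => @segment_compact R (a 0 c - t) (a 0 c + t)).
have [|p [_ clp]] := box_compact (u @ \oo)%classic _; last by exists p.
exists 0%N => // k _ c; rewrite /= in_itv /= -ler_distlC -(ler_sqr) ?nnegrE //.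
rewrite real_normK ?num_real // (le_trans _ (u_near k)) //.
by rewrite (le_trans _ (sqr_coord_le_sqnorm _ c)) // !mxE.
Qed.

Lemma cluster_le (T : topologicalType) (F : set_system T) (phi : T -> R) (c : R) p :
  continuous phi -> cluster F p -> F [set x | phi x <= c]%classic -> phi p <= c.
Proof.
move=> phi_cont clp Fc.
have : closed (phi @^-1` [set y | y <= c])%classic.
  by apply: preimage_closed; [move=> x _; apply: phi_cont | apply: closed_le].
by apply=> B Bp; apply: clp Fc Bp.
Qed.

End Compactness.

Section CircumscribedBall.
Variables (R : realType) (d n : nat) (A : 'I_n -> 'rV[R]_d).
Implicit Types (z b : 'rV[R]_d) (s : R) (V : {set 'I_n}).

Lemma rhoS_center z0 s0 z s : 0 < s -> rhoS A z s = rhoS A z0 s0 ->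
  (forall i j, i \in A_in A z0 s0 :|: A_on A z0 s0 -> j \notin A_in A z0 s0 ->
     sqnorm (A i - z) <= sqnorm (A j - z)) /\
  (forall i, i \in A_in A z0 s0 :|: A_on A z0 s0 -> sqnorm (A i - z) <= s ^+ 2).
Proof.
move=> /ltW s_ge0 /rhoS_eq[<- <-].
have inside i : i \in A_in A z s :|: A_on A z s -> sqnorm (A i - z) <= s ^+ 2.
  by rewrite in_setU !inE -enorm_le // le_eqVlt orbC.
split=> // i j /inside iz; rewrite inE -leNgt enorm_ge // => jz.
exact: le_trans iz jz.
Qed.

Lemma BallVor_rhoS z s r b : 0 <= r ->
  (forall i j, i \in A_in A z s :|: A_on A z s -> j \notin A_in A z s ->
     sqnorm (A i - b) <= sqnorm (A j - b)) ->
  (forall i, i \in A_in A z s :|: A_on A z s -> sqnorm (A i - b) <= r ^+ 2) ->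
  forall V, V \in rhoS A z s -> BallVor A r V b.
Proof.
move=> r0 vor ball V; rewrite mem_rhoS => /andP[IV /subsetP VU]; split.
  by move=> i /VU iU; rewrite enormBC enorm_le // ball.
move=> i j /VU iU jV; rewrite ler_enorm sqnormBC [X in _ <= X]sqnormBC vor //.
exact: contra (subsetP IV j) jV.
Qed.

Lemma rrad_approx z0 s0 r (k : nat) : 0 < s0 -> rrad A (rhoS A z0 s0) <= r ->
  exists zs : 'rV[R]_d * R,
    [/\ 0 < zs.2, rhoS A zs.1 zs.2 = rhoS A z0 s0 & zs.2 < r + k.+1%:R^-1].
Proof.
move=> s0_gt0 rr; have lt_k : rrad A (rhoS A z0 s0) < r + k.+1%:R^-1.
  by apply: le_lt_trans rr _; rewrite ltrDl invr_gt0 ltr0n.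
have E_s0 : [set s | exists z, 0 < s /\ rhoS A z s = rhoS A z0 s0]%classic s0 by exists z0.
have [s [z [s_gt0 zs]] slt] := inf_lt (ex_intro _ s0 E_s0) lt_k.
by exists (z, s).
Qed.

(* Spheres realizing [rho] with radii tending to [rrad rho] have bounded
   centers; a cluster point of the centers is the common witness. *)
Lemma rrad_BallVor z0 s0 r : 0 < s0 -> rrad A (rhoS A z0 s0) <= r ->
  exists b, forall V, V \in rhoS A z0 s0 -> BallVor A r V b.
Proof.
move=> s0_gt0 rr.
have r0 : 0 <= r by apply: le_trans rr; apply: rrad_ge0; exists z0, s0.
set U := A_in A z0 s0 :|: A_on A z0 s0.
have [U0|[u uU]] := set_0Vmem U.
  by exists 0 => V; apply: BallVor_rhoS => // i; rewrite -/U U0 inE.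
have [zs zsP] := choice (fun k => rrad_approx k s0_gt0 rr).
pose zk k := (zs k).1; pose sk k := (zs k).2.
have sk_gt0 k : 0 < sk k by case: (zsP k).
have zk_center k := rhoS_center (sk_gt0 k) (let: And3 _ e _ := zsP k in e).
have sk_le k k' : (k' <= k)%N -> sk k <= r + k'.+1%:R^-1.
  move=> kk'; apply: ltW; case: (zsP k) => _ _ /lt_le_trans; apply.
  by rewrite lerD2l lef_pV2 ?posrE ?ltr0n // ler_nat.
have sk_bound k : 0 <= sk k <= r + 1.
  by rewrite ltW ?sk_gt0 //= (le_trans (sk_le k 0%N _)) // invr1.
have zk_near k : sqnorm (A u - zk k) <= (r + 1) ^+ 2.
  rewrite (le_trans ((zk_center k).2 u uU)) // ler_sqr ?nnegrE;
    by case/andP: (sk_bound k) => // *; lra.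
have [p clp] := bounded_seq_cluster (ltac:(lra) : 0 <= r + 1) zk_near.
exists p; apply: BallVor_rhoS => // [i j iU jI|i iU].
  rewrite -subr_le0.
  apply: (cluster_le (phi := fun b => sqnorm (A i - b) - sqnorm (A j - b))) clp _.
    by move=> b; exact: (cvgB (@continuous_sqnormB R d (A i) b) (@continuous_sqnormB R d (A j) b)).
  by exists 0%N => // k _ /=; rewrite subr_le0 (zk_center k).1.
rewrite -enorm_le // leNgt; apply/negP => /ltr_add_invr[k rk].
have : enorm (A i - p) <= r + k.+1%:R^-1.
  rewrite enorm_le; last by rewrite addr_ge0 ?invr_ge0.
  apply: (cluster_le (phi := fun b => sqnorm (A i - b))) clp _; first exact: continuous_sqnormB.
  exists k => // m /= km; rewrite (le_trans ((zk_center m).2 i iU)) // ler_sqr ?nnegrE ?sk_le //.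
    by case/andP: (sk_bound m).
  by rewrite addr_ge0 ?invr_ge0.
by rewrite leNgt rk.
Qed.

End CircumscribedBall.

Section CellsAreSimplices.
Variables (R : realType) (d n : nat) (A : 'I_n -> 'rV[R]_d).
Implicit Types (z b : 'rV[R]_d) (s r : R) (T V : {set 'I_n}) (sigma : {set {set 'I_n}}).

Lemma sdel_simplex_intro r k sigma b (j : nat) : sigma != set0 ->
  (forall T, T \in sigma -> BallVor A r T b) ->
  (forall T, T \in sigma -> k <= #|T|)%N ->
  (forall T, T \in sigma -> j <= #|T| <= j.+1)%N ->
  sdel_simplex A r k sigma.
Proof.
case/set0Pn=> T0 T0sigma ball k_le slice.
have [Tm Tm_sigma Tm_min] := arg_minnP (fun T => #|T|) T0sigma.
have /andP[jTm _] := slice Tm Tm_sigma.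
exists #|Tm|; split; first exact: k_le.
split; first by apply/card_gt0P; exists T0.
split; last by exists b.
move=> T Tsigma; split; last by exists b; apply: ball.
have /andP[_ Tj] := slice T Tsigma; have := Tm_min T Tsigma.
by rewrite !eqn_leq; lia.
Qed.

Lemma cellV_sdel_simplex r k rho j slab : general_position A ->
  in_SRhomb A r k rho j slab -> sdel_simplex A r k (cellV A rho j slab).
Proof.
move=> gp [[[z [s [s_gt0 <-]]] [_ [x cx]]] [[_ [[[z' [s' [s'_gt0 <-]]] [cell_sub _]] rr]] k_le]].
have [V0 V0rho V0j] := cellpts_rhoS_vertex cx.
have [b ball] := rrad_BallVor s'_gt0 rr.
have cellV_sub V : V \in cellV A (rhoS A z s) j slab -> V \in rhoS A z' s'.
  move=> /[dup] /mem_cellV[Vrho _]; rewrite inE => /andP[_ /asboolP[cV _]].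
  exact: mem_rhoS_conv (ltW s_gt0) (ltW s'_gt0) Vrho (cell_sub _ cV).
apply: (sdel_simplex_intro (b := b) (j := j)) k_le _.
- by apply/set0Pn; exists V0; rewrite cellV_rhoS ?V0rho // ltW.
- by move=> T /cellV_sub; apply: ball.
- move=> T /mem_cellV[_]; rewrite /in_slice; case: (slab) => [//|/eqP ->].
  by rewrite leqnn leqnSn.
Qed.

End CellsAreSimplices.

Lemma small_perturbation (R : realFieldType) (I : finType) (a delta : I -> R) (eps : R) :
  0 < eps -> exists2 e, 0 < e <= eps &
    forall i, (a i < 0 -> a i + e * delta i < 0) /\ (0 < a i -> 0 < a i + e * delta i).
Proof.
move=> eps_gt0.
pose gap := \big[Num.min/1]_(i | a i != 0) `|a i|.
have gap_gt0 : 0 < gap by apply: lt_bigmin => // i ai; rewrite normr_gt0.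
have gap_le i : a i != 0 -> gap <= `|a i| by move=> ai; exact: bigmin_le_cond.
pose D := 1 + \sum_i `|delta i|.
have D_ge i : `|delta i| <= D.
  by rewrite /D (bigD1 i) //= addrCA lerDl addr_ge0 ?sumr_ge0.
have D_gt0 : 0 < D by rewrite ltr_pwDl ?sumr_ge0.
pose e := Num.min eps (gap / (2 * D)).
have e_gt0 : 0 < e by rewrite lt_min eps_gt0 divr_gt0 ?mulr_gt0.
have e_le : e <= gap / (2 * D) by rewrite ge_min lexx orbT.
exists e; first by rewrite e_gt0 ge_min lexx.
move=> i; have small : `|e * delta i| <= gap / 2.
  rewrite normrM (gtr0_norm e_gt0) (le_trans (ler_wpM2l (ltW e_gt0) (D_ge i))) //.
  by rewrite -ler_pdivlMr // -mulrA -invfM.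
move: small; rewrite ler_norml => /andP[lo hi].
split=> ai; have := gap_le i;
  by rewrite ?(ltr0_norm ai) ?(gtr0_norm ai) ?(lt_eqF ai) ?(gt_eqF ai) => /(_ isT); lra.
Qed.

Lemma perturbed_radius_le (R : realFieldType) (mu r eta e kappa G : R) :
  0 <= r -> 0 < eta -> 0 < e <= 1 -> 0 <= G -> mu <= r ^+ 2 ->
  e * (`|kappa| + G + 1) <= eta ^+ 2 -> mu + e * kappa + e ^+ 2 * G <= (r + eta) ^+ 2.
Proof.
move=> r0 eta_gt0 /andP[e_gt0 e_le1] G0 mu_r eK.
have kappa_le : e * kappa <= e * `|kappa| by apply: ler_wpM2l; [exact: ltW | exact: ler_norm].
have G_le : e ^+ 2 * G <= e * G by have := mulr_ge0 (ltW e_gt0) G0; nra.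
by have := mulr_ge0 r0 (ltW eta_gt0); rewrite sqrrD; lra.
Qed.

Section GenericSphere.
Variables (R : realType) (d n : nat) (A : 'I_n -> 'rV[R]_d).
Implicit Types (z b : 'rV[R]_d) (s r : R) (T : {set 'I_n}).

Lemma separating_sphere z t T : 0 < t ->
  (forall i, i \in T -> sqnorm (A i - z) < t) ->
  (forall j, j \notin T -> t < sqnorm (A j - z)) ->
  A_in A z (Num.sqrt t) = T /\ A_on A z (Num.sqrt t) = set0.
Proof.
move=> t_gt0 inside outside; have sqrt_t : Num.sqrt t ^+ 2 = t by rewrite sqr_sqrtr ?ltW.
split; apply/setP => i; rewrite !inE ?enorm_lt ?enorm_eq ?sqrtr_ge0 // sqrt_t.
  by case: (boolP (i \in T)) => [/inside -> // | /outside/ltW out]; rewrite ltNge out.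
by case: (boolP (i \in T)) => [/inside/lt_eqF|/outside/gt_eqF].
Qed.

(* Shrink the empty ball of [T] towards the sites of [T] at maximal distance
   [sqrt mu] from [b]: these are affinely independent, so the center can be
   moved along a direction [g] which pushes those in [T] strictly inside and
   the others strictly outside, while the other sites keep their side. *)
Lemma BallVor_generic_sphere r eta T b : general_position A -> 0 <= r -> 0 < eta ->
  T != set0 -> BallVor A r T b ->
  exists z s, [/\ 0 < s, s <= r + eta, A_in A z s = T & A_on A z s = set0].
Proof.
move=> gp r0 eta_gt0 /set0Pn[a0 a0T] [ball vor].
pose q i := sqnorm (A i - b).
have [a1 a1T a1max] := arg_maxP q a0T.
pose mu := q a1.
have mu_r : mu <= r ^+ 2 by rewrite /mu /q sqnormBC -enorm_le // ball.
have qT i : i \in T -> q i <= mu by move/a1max.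
have qnT j : j \notin T -> mu <= q j.
  by move=> jT; rewrite /mu /q sqnormBC [X in _ <= X]sqnormBC -ler_enorm vor.
pose S := [set i | q i == mu].
have indepS : aff_indep A S.
  apply: (cospherical_aff_indep (z := b) (s := Num.sqrt mu) gp) => i.
  by rewrite inE enormE => /eqP <-.
have [g [c gc]] := aff_indep_solve (fun i => if i \in T then 1 else 0) indepS.
pose kappa := 2 * (c + dot b g) - 1.
pose K := `|kappa| + sqnorm g + 1.
have K_gt0 : 0 < K by rewrite ltr_pwDr // addr_ge0 ?sqnorm_ge0.
have eps_gt0 : 0 < Num.min 1 (eta ^+ 2 / K) by rewrite lt_min ltr01 divr_gt0 ?exprn_gt0.
have [e /andP[e_gt0]] :=
  small_perturbation (fun i => q i - mu) (fun i => 1 - 2 * (dot (A i) g + c)) eps_gt0.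
rewrite le_min => /andP[e_le1 e_leK] e_sign.
pose z := b + e *: g; pose s2 := mu + e * kappa + e ^+ 2 * sqnorm g.
have shift i : sqnorm (A i - z) - s2 = (q i - mu) + e * (1 - 2 * (dot (A i) g + c)).
  by rewrite /z opprD addrA sqnormB sqnormZ dotZr dotBl /s2 /kappa /q; ring.
have inside i : i \in T -> sqnorm (A i - z) < s2.
  move=> iT; rewrite -subr_lt0 shift; case: (boolP (i \in S)) => iS.
    by rewrite gc // iT /=; move: iS; rewrite inE => /eqP ->; lra.
  by apply: (e_sign i).1; rewrite subr_lt0 lt_neqAle qT // andbT; rewrite inE in iS.
have outside j : j \notin T -> s2 < sqnorm (A j - z).
  move=> jT; rewrite -subr_gt0 shift; case: (boolP (j \in S)) => jS.
    by rewrite gc // (negbTE jT) /=; move: jS; rewrite inE => /eqP ->; lra.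
  by apply: (e_sign j).2; rewrite subr_gt0 lt_neqAle eq_sym qnT // andbT; rewrite inE in jS.
have s2_gt0 : 0 < s2 by apply: le_lt_trans (inside a0 a0T); apply: sqnorm_ge0.
have s2_le : s2 <= (r + eta) ^+ 2.
  by apply: perturbed_radius_le; rewrite ?sqnorm_ge0 ?e_gt0 // -ler_pdivlMr.
have [IT O0] := separating_sphere s2_gt0 inside outside.
exists z, (Num.sqrt s2); split=> //; first by rewrite sqrtr_gt0.
by rewrite -(ger0_norm (addr_ge0 r0 (ltW eta_gt0))) -sqrtr_sqr ler_sqrt ?sqr_ge0.
Qed.

End GenericSphere.

Section SimplicesInCells.
Variables (R : realType) (d n : nat) (A : 'I_n -> 'rV[R]_d).
Implicit Types (z b : 'rV[R]_d) (s r : R) (T V W : {set 'I_n}) (sigma : {set {set 'I_n}}).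

Lemma rhoS_sub_of_cell z s z2 s2 j slab : 0 <= s -> 0 <= s2 ->
  (exists2 V0, V0 \in rhoS A z s & in_slice j slab #|V0|) ->
  (forall o, o \in A_on A z s ->
     exists2 V, V \in rhoS A z s & in_slice j slab #|V| && (o \in V)) ->
  (forall o, o \in A_on A z s ->
     exists2 V, V \in rhoS A z s & in_slice j slab #|V| && (o \notin V)) ->
  (forall x, cellpts A (rhoS A z s) j slab x -> conv A (rhoS A z2 s2) x) ->
  rhoS A z s \subset rhoS A z2 s2.
Proof.
move=> s0 s20 [V0 V0rho V0j] with_o without_o cell_sub.
have slice_sub V : V \in rhoS A z s -> in_slice j slab #|V| -> V \in rhoS A z2 s2.
  by move=> Vrho Vj; apply: (mem_rhoS_conv s0 s20 Vrho); apply/cell_sub/cellpts_embed.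
have /[dup] V0rho2 := slice_sub V0 V0rho V0j; rewrite !mem_rhoS => /andP[I2V0 V0U2].
move: V0rho; rewrite mem_rhoS => /andP[IV0 V0U].
apply/subsetP => W; rewrite !mem_rhoS => /andP[IW WU]; apply/andP; split.
  apply/subsetP => x xI2; move/subsetP: V0U => /(_ x (subsetP I2V0 x xI2)).
  rewrite in_setU => /orP[/(subsetP IW) // | xO].
  have [V Vrho /andP[Vj xV]] := without_o x xO.
  move: (slice_sub V Vrho Vj); rewrite mem_rhoS => /andP[/subsetP/(_ x xI2)].
  by rewrite (negbTE xV).
apply/subsetP => x /(subsetP WU); rewrite in_setU => /orP[xI | xO].
  exact/(subsetP V0U2)/(subsetP IV0).
have [V Vrho /andP[Vj xV]] := with_o x xO.
by move: (slice_sub V Vrho Vj); rewrite mem_rhoS => /andP[_ /subsetP]; apply.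
Qed.

Lemma rhoS_in_SRhomb r k z s j slab : general_position A -> 0 < s ->
  rrad A (rhoS A z s) <= r ->
  (exists2 V0, V0 \in rhoS A z s & in_slice j slab #|V0|) ->
  (forall o, o \in A_on A z s ->
     exists2 V, V \in rhoS A z s & in_slice j slab #|V| && (o \in V)) ->
  (forall o, o \in A_on A z s ->
     exists2 V, V \in rhoS A z s & in_slice j slab #|V| && (o \notin V)) ->
  (forall V, V \in rhoS A z s -> in_slice j slab #|V| -> k <= #|V|)%N ->
  in_SRhomb A r k (rhoS A z s) j slab.
Proof.
move=> gp s_gt0 rr [V0 V0rho V0j] with_o without_o k_le.
split; [split; [by exists z, s | split] | split].
- have := max_card (mem V0); rewrite card_ord; apply: leq_trans.
  by case: (slab) V0j => [/andP[]|/eqP ->].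
- by exists (embed A V0); apply: cellpts_embed.
- exists (rhoS A z s); split=> //; split; first by exists z, s.
  split; first by move=> x [].
  move=> _ [z2 [s2 [s2_gt0 <-]]] cell_sub; apply/subset_leq_card.
  apply: rhoS_sub_of_cell (ltW s_gt0) (ltW s2_gt0) _ with_o without_o cell_sub.
  by exists V0.
- by move=> V /mem_cellV[]; apply: k_le.
Qed.

Lemma rhoS_set1 z s T : A_in A z s = T -> A_on A z s = set0 -> rhoS A z s = [set T].
Proof.
move=> IT O0; apply/setP => W; rewrite mem_rhoS O0 setU0 IT in_set1 eq_sym eqEsubset.
by rewrite andbC.
Qed.

Lemma BallVor_singleton_cell r k T b : general_position A -> 0 <= r ->
  (0 < k <= #|T|)%N -> BallVor A r T b ->
  in_SRhomb A r k [set T] #|T| false /\ T \in cellV A [set T] #|T| false.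
Proof.
move=> gp r0 /andP[k_gt0 kT] ballvor.
have T0 : T != set0 by rewrite -card_gt0 (leq_trans k_gt0 kT).
have [z [s [s_gt0 _ IT O0]]] := BallVor_generic_sphere gp r0 ltr01 T0 ballvor.
rewrite -(rhoS_set1 IT O0).
have rr : rrad A (rhoS A z s) <= r.
  apply/ler_addgt0Pr => eta eta_gt0.
  have [z' [s' [s'_gt0 s'_le IT' O0']]] := BallVor_generic_sphere gp r0 eta_gt0 T0 ballvor.
  apply: le_trans s'_le; apply: ge_inf; first by exists 0 => x [_ [x0 _]]; apply: ltW.
  by exists z'; rewrite (rhoS_set1 IT O0) (rhoS_set1 IT' O0').
split; last by rewrite cellV_rhoS ?ltW // (rhoS_set1 IT O0) set11 /in_slice /=.
apply: rhoS_in_SRhomb => //.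
- by exists T; rewrite ?(rhoS_set1 IT O0) ?set11 /in_slice ?eqxx.
- by move=> o; rewrite O0 inE.
- by move=> o; rewrite O0 inE.
- by move=> V _ /eqP ->.
Qed.

End SimplicesInCells.

Section Faces.
Variables (R : realType) (d n : nat) (A : 'I_n -> 'rV[R]_d).
Implicit Types (z b : 'rV[R]_d) (s r : R) (T V W : {set 'I_n}) (sigma : {set {set 'I_n}}).

Lemma rhoS_card_min z s W : W \in rhoS A z s -> (#|W| <= #|A_in A z s|)%N -> W = A_in A z s.
Proof. by rewrite mem_rhoS => /andP[IW _] WI; apply/esym/eqP; rewrite eqEcard IW. Qed.

Lemma rhoS_card_max z s W : W \in rhoS A z s ->
  (#|A_in A z s| + #|A_on A z s| <= #|W|)%N -> W = A_in A z s :|: A_on A z s.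
Proof.
by rewrite mem_rhoS => /andP[_ WU] UW; apply/eqP; rewrite eqEcard WU card_A_in_on.
Qed.

(* With [[lo, hi]] the range of the sizes in [sigma], two distinct vertices
   force [#|A_in| < hi] and [lo < #|A_in| + #|A_on|]: every site on the sphere
   then lies in some vertex of the slice at depths [[lo, hi]] and outside
   another one, which makes [rhoS z s] the smallest rhomboid of that slice. *)
Lemma sub_rhoS_cell r k z s sigma T1 T2 (i : nat) : general_position A -> 0 < s ->
  rrad A (rhoS A z s) <= r -> sigma \subset rhoS A z s ->
  T1 \in sigma -> T2 \in sigma -> T1 != T2 ->
  (forall T, T \in sigma -> i <= #|T| <= i.+1)%N ->
  (forall T, T \in sigma -> k <= #|T|)%N ->
  exists j slab, in_SRhomb A r k (rhoS A z s) j slab /\ sigma \subset cellV A (rhoS A z s) j slab.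
Proof.
move=> gp s_gt0 rr /subsetP sub T1sigma T2sigma T12 sizes k_le.
have [Tlo Tlo_sigma lo_min] := arg_minnP (fun T => #|T|) T1sigma.
have [Thi Thi_sigma hi_max] := arg_maxnP (fun T => #|T|) T1sigma.
set lo := #|Tlo| in lo_min *; set hi := #|Thi| in hi_max *.
have lo_hi : (lo <= hi)%N := lo_min Thi Thi_sigma.
have hi_lo : (hi <= lo.+1)%N.
  by case/andP: (sizes Tlo Tlo_sigma) => ? _; case/andP: (sizes Thi Thi_sigma) => _ ?; lia.
have sliceE m : in_slice lo (lo < hi)%N m = (lo <= m <= hi)%N.
  rewrite /in_slice; case: ltnP => [lt_lo_hi|le_hi_lo].
    have hiE : hi = lo.+1 by lia.
    by rewrite hiE.
  have hiE : hi = lo by lia.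
  by rewrite hiE eqn_leq andbC.
have [/card_rhoS/andP[I_lo _] /card_rhoS/andP[_ hi_IO]] := (sub _ Tlo_sigma, sub _ Thi_sigma).
have I_hi : (#|A_in A z s| < hi)%N.
  rewrite ltnNge; apply: contraNN T12 => hi_I.
  have eqI T : T \in sigma -> T = A_in A z s.
    by move=> Tsigma; apply: rhoS_card_min (sub _ Tsigma) (leq_trans (hi_max T Tsigma) hi_I).
  by rewrite (eqI T1) // (eqI T2).
have lo_IO : (lo < #|A_in A z s| + #|A_on A z s|)%N.
  rewrite ltnNge; apply: contraNN T12 => IO_lo.
  have eqIO T : T \in sigma -> T = A_in A z s :|: A_on A z s.
    by move=> Tsigma; apply: rhoS_card_max (sub _ Tsigma) (leq_trans IO_lo (lo_min T Tsigma)).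
  by rewrite (eqIO T1) // (eqIO T2).
exists lo, (lo < hi)%N; split.
  apply: rhoS_in_SRhomb => //.
  - by exists Tlo; rewrite ?sub ?sliceE ?leqnn.
  - move=> o oO; have := rhoS_card_with (m := hi) oO; rewrite I_hi hi_IO.
    case=> // V Vrho /andP[oV /eqP cardV].
    by exists V; rewrite ?sliceE ?cardV ?leqnn ?lo_hi ?oV.
  - move=> o oO; have := rhoS_card_without (m := lo) oO; rewrite I_lo lo_IO.
    case=> // V Vrho /andP[oV /eqP cardV].
    by exists V; rewrite ?sliceE ?cardV ?leqnn ?lo_hi ?oV.
  - by move=> V _; rewrite sliceE => /andP[loV _]; apply: leq_trans (k_le _ Tlo_sigma) loV.
apply/subsetP => T Tsigma; rewrite cellV_rhoS ?ltW ?sub //= sliceE.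
by rewrite (lo_min T Tsigma); apply: hi_max.
Qed.

Lemma Vor_sub_rhoS sigma b T' a (i : nat) : T' \in sigma -> a \in T' ->
  (forall T, T \in sigma -> Vor A T b) ->
  (forall T, T \in sigma -> i <= #|T| <= i.+1)%N ->
  (forall T x, T \in sigma -> x \in T -> enorm (A x - b) <= enorm (A a - b)) ->
  sigma \subset rhoS A b (enorm (A a - b)).
Proof.
move=> T'sigma aT' vor sizes far; set s := enorm (A a - b).
apply/subsetP => T Tsigma; rewrite mem_rhoS; apply/andP; split; last first.
  by apply/subsetP => x xT; rewrite in_setU !inE orbC -le_eqVlt (far T x Tsigma xT).
apply/subsetP => c; rewrite inE => cI; apply/negPn/negP => cT.
have inT' x : enorm (A x - b) < s -> x \in T'.
  move=> xs; apply/negPn/negP => xT'; move: (vor T' T'sigma a x aT' xT').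
  by rewrite !(enormBC b) leNgt xs.
have T_in t : t \in T -> enorm (A t - b) < s.
  by move=> tT; apply: le_lt_trans cI; rewrite !(enormBC (A _)) (vor T Tsigma).
have ca : c != a by apply/eqP => ca; move: cI; rewrite ca ltxx.
have TT' : T \subset (T' :\ a) :\ c.
  apply/subsetP => t tT; rewrite !in_setD1 inT' ?T_in // andbT.
  have -> : t != c by apply/eqP => tc; rewrite -tc tT in cT.
  by apply/eqP => ta; move: (T_in t tT); rewrite ta ltxx.
have := subset_leq_card TT'; have := cardsD1 a T'; have := cardsD1 c (T' :\ a).
rewrite in_setD1 ca inT' // aT' /= => e1 e2 TT'_card.
have : (#|T|.+2 <= #|T'|)%N by rewrite e2 e1 !add1n !ltnS.
by case/andP: (sizes T Tsigma) => iT _; case/andP: (sizes T' T'sigma) => _ T'i; lia.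
Qed.

End Faces.

Section SimplicesAreInCells.
Variables (R : realType) (d n : nat) (A : 'I_n -> 'rV[R]_d).
Implicit Types (z b : 'rV[R]_d) (s r : R) (T : {set 'I_n}) (sigma : {set {set 'I_n}}).

Lemma sdel_simplex_cell r k sigma : general_position A -> injective A -> 0 <= r -> (0 < k)%N ->
  sdel_simplex A r k sigma ->
  exists rho j slab, in_SRhomb A r k rho j slab /\ sigma \subset cellV A rho j slab.
Proof.
move=> gp injA r0 k_gt0 [i [ki [/card_gt0P[T1 T1sigma] [vertex [b ballvor]]]]].
have sizes T : T \in sigma -> (i <= #|T| <= i.+1)%N.
  by case/vertex => /orP[] /eqP ->; rewrite leqnn ?leqnSn.
have k_le T : T \in sigma -> (k <= #|T|)%N.
  by move/sizes/andP => [iT _]; apply: leq_trans iT.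
have [sigma1|/subsetPn[T2 T2sigma]] := boolP (sigma \subset [set T1]).
  have [cell T1cell] := BallVor_singleton_cell gp r0 (introT andP (conj k_gt0 (k_le T1 T1sigma)))
    (ballvor T1 T1sigma).
  by exists [set T1], #|T1|, false; rewrite (subset_trans sigma1) ?sub1set.
rewrite in_set1 => T21.
pose U := \bigcup_(T in sigma) T.
have [a0 a0T1] : exists a0, a0 \in T1 by apply/card_gt0P; apply: leq_trans k_gt0 (k_le T1 T1sigma).
have a0U : a0 \in U by apply/bigcupP; exists T1.
have [a /bigcupP[T' T'sigma aT'] far] := arg_maxP (fun x => enorm (A x - b)) a0U.
have far' T x : T \in sigma -> x \in T -> enorm (A x - b) <= enorm (A a - b).
  by move=> Tsigma xT; apply: far; apply/bigcupP; exists T.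
have sub := Vor_sub_rhoS T'sigma aT' (fun T Tsigma => (ballvor T Tsigma).2) sizes far'.
have s_gt0 : 0 < enorm (A a - b).
  rewrite lt_neqAle enorm_ge0 andbT; apply: contraNneq T21 => s0.
  have at_b T x : T \in sigma -> x \in T -> A x = b.
    move=> Tsigma xT; apply/eqP; rewrite -subr_eq0 -enorm_eq0 eq_le enorm_ge0 andbT.
    by rewrite s0 (far' T x Tsigma xT).
  have single T : T \in sigma -> T = [set a].
    move=> Tsigma; apply/eqP; rewrite eqEcard cards1 (leq_trans k_gt0 (k_le T Tsigma)) andbT.
    by apply/subsetP => x xT; rewrite in_set1; apply/eqP/injA; rewrite (at_b T x) // (at_b T' a).
  by rewrite (single T2) // (single T1).
have rr : rrad A (rhoS A b (enorm (A a - b))) <= r.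
  by rewrite (le_trans (rrad_le _ _ s_gt0)) // enormBC (ballvor T' T'sigma).1.
have [j [slab [cell sigma_cell]]] :=
  sub_rhoS_cell gp s_gt0 rr sub T1sigma T2sigma (ltac:(by rewrite eq_sym) : T1 != T2) sizes k_le.
by exists (rhoS A b (enorm (A a - b))), j, slab.
Qed.

End SimplicesAreInCells.

Lemma sdel_vertex_simplex (R : realType) (d n : nat) (A : 'I_n -> 'rV[R]_d) r k v :
  sdel_vertex A r k v -> sdel_simplex A r k [set v].
Proof.
case=> i [ki [vi [b vb]]]; exists i; split=> //; split; first by rewrite cards1.
by split; [move=> T /set1P -> | exists b => T /set1P ->] => //; split=> //; exists b.
Qed.

Theorem lemma7 (R : realType) (d n : nat) (A : 'I_n -> 'rV[R]_d)
  (hd : (0 < d)%N) (hinj : injective A) (hgp : general_position A)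
  (r : R) (k : nat) (hr : 0 <= r) (hk : (0 < k)%N) :
  (forall v : {set 'I_n}, srhomb_vertex A r k v <-> sdel_vertex A r k v) /\
  (forall (rho : {set {set 'I_n}}) (j : nat) (slab : bool),
     in_SRhomb A r k rho j slab -> sdel_simplex A r k (cellV A rho j slab)) /\
  (forall sigma : {set {set 'I_n}}, sdel_simplex A r k sigma ->
     exists (rho : {set {set 'I_n}}) (j : nat) (slab : bool),
       in_SRhomb A r k rho j slab /\ sigma \subset cellV A rho j slab).
Proof.
have cells_in_sdel := @cellV_sdel_simplex _ _ _ A r k.
have sdel_in_cells sigma := @sdel_simplex_cell _ _ _ A r k sigma hgp hinj hr hk.
split; last split.
- move=> v; split.
    case=> rho [j [slab [cell vcell]]].
    have [i [ki [_ [vertex _]]]] := cells_in_sdel rho j slab hgp cell.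
    by exists i; split; last exact: vertex.
  move/sdel_vertex_simplex/sdel_in_cells => [rho [j [slab [cell]]]].
  by rewrite sub1set => vcell; exists rho, j, slab.
- by move=> rho j slab; apply: cells_in_sdel.
- exact: sdel_in_cells.
Qed.
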